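(* Let $n\in\mathbf{N}$, $b\in\mathbf{N}$ and $\ell\in\mathbf{N}$. There exists $C>0$ such that $\|m^1_{b,\ell,L}(\cdot,t)\|_{L^2(\mathbf{R}^n_\xi)}\le Ct^{2(b-1)}e^{-t/2}+Ct^{-\frac n4-\ell}$ for all $t\ge1$.
   Context: Expressions $\cos(t\sqrt z)$ denote the entire function $\sum_m(-1)^mt^{2m}z^m/(2m)!$ of $z\in\mathbf{R}$ (equal to $\cosh(t\sqrt{-z})$ for $z<0$). For $r\ge0$, $c\in\mathbf{R}$, $a\in[0,1]$ with $4ar^2<1$, $t>0$: $f(r,c,t)=\cos(t\sqrt{r^2-c})$, $g(r,a,t)=\exp(-\frac{2tr^2}{1+\sqrt{1-4ar^2}})$. For $\xi\neq0$: $W^1_b(\xi,t)=\sum_{k=0}^{b-1}(\frac14)^k\frac1{k!}\partial_c^kf(|\xi|,0,t)$, $D^1_\ell(\xi,t)=\frac12\sum_{k=0}^{\ell-1}\frac1{k!}\partial_a^kg(|\xi|,0,t)$. Let $\chi_L$ be a smooth function on $[0,\infty)$ with $\chi_L(r)=0$ for $r\ge\frac13$ and $\chi_L(r)=1$ for $r\le\frac14$. Define $m^1_{b,\ell,L}(\xi,t)=\chi_L(|\xi|)\big[e^{-t/2}\cos(t\sqrt{|\xi|^2-\frac14})-e^{-t/2}W^1_b(\xi,t)-D^1_\ell(\xi,t)\big]$. *)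

From Stdlib Require Import Reals Lra List ClassicalEpsilon Factorial.
Open Scope R_scope.

(* The entire function z |-> cos(t sqrt z) (= cosh(t sqrt(-z)) for z < 0). *)
Definition cosqrt (t z : R) : R :=
  if Rle_dec 0 z then cos (t * sqrt z) else cosh (t * sqrt (- z)).

(* Derivative of f at x (the unique l with derivable_pt_lim f x l; 0 if none). *)
Definition deriv (f : R -> R) (x : R) : R :=
  match excluded_middle_informative (exists l, derivable_pt_lim f x l) with
  | left H => proj1_sig (constructive_indefinite_description _ H)
  | right _ => 0
  end.

Definition nth_deriv (k : nat) (f : R -> R) : R -> R := Nat.iter k deriv f.

Definition smooth (h : R -> R) : Prop :=
  exists F : nat -> R -> R, F 0%nat = h /\
    forall k x, derivable_pt_lim (F k) x (F (S k) x).

Fixpoint sumk (n : nat) (F : nat -> R) : R :=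
  match n with O => 0 | S k => sumk k F + F k end.

Definition f_fun (r c t : R) : R := cosqrt t (r ^ 2 - c).
Definition g_fun (r a t : R) : R :=
  exp (- (2 * t * r ^ 2) / (1 + sqrt (1 - 4 * a * r ^ 2))).

(* W^1_b and D^1_l, as functions of r = |xi| *)
Definition W1 (b : nat) (r t : R) : R :=
  sumk b (fun k => (/ 4) ^ k * / INR (fact k) * nth_deriv k (fun c => f_fun r c t) 0).
Definition D1 (l : nat) (r t : R) : R :=
  / 2 * sumk l (fun k => / INR (fact k) * nth_deriv k (fun a => g_fun r a t) 0).

(* m^1_{b,l,L}, as a function of r = |xi| *)
Definition m1 (chi : R -> R) (b l : nat) (r t : R) : R :=
  chi r * (exp (- t / 2) * cosqrt t (r ^ 2 - / 4)
           - exp (- t / 2) * W1 b r t - D1 l r t).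

(* Riemann integral on [a,b] (0 if not Riemann integrable) *)
Definition RInt (f : R -> R) (a b : R) : R :=
  match excluded_middle_informative (exists pr : Riemann_integrable f a b, True) with
  | left H => RiemannInt (proj1_sig (constructive_indefinite_description _ H))
  | right _ => 0
  end.

(* Iterated integral over the box [-1,1]^n; points of R^n are lists of length n *)
Fixpoint box_int (n : nat) (F : list R -> R) : R :=
  match n with
  | O => F nil
  | S k => RInt (fun x => box_int k (fun v => F (x :: v))) (-1) 1
  end.

Definition normv (v : list R) : R := sqrt (fold_right (fun x s => x * x + s) 0 v).

(* L^2(R^n) norm of a function supported in the unit ball *)
Definition L2norm (n : nat) (F : list R -> R) : R :=
  sqrt (box_int n (fun v => (F v) ^ 2)).

(* On the support of [chi] we have [r <= 1/3 < 1/2], so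
   [e^{-t/2} cos (t sqrt (r^2 - 1/4)) = (g(r,1,t) + e^{-t/2 - t sqrt (1/4 - r^2)}) / 2],
   while [2 D^1_l] is the Taylor polynomial of order [l] at [a = 0] of [a |-> g(r,a,t)],
   evaluated at [a = 1].  With [u = r^2] and [s = t u], [g = exp (- s h(a))] where
   [h(a) = 2 / (1 + sqrt (1 - 4 a u))]; every [a]-derivative of order [l] is [u^l] times a
   finite sum of monomials [s^i h^j (1/sqrt (1 - 4 a u))^m g], so the Taylor remainder is
   [O (u^l (1 + s)^N e^{-s}) = O (t^-l e^{-t r^2 / 2})].  The other terms are
   [O (t^{2b} e^{-t/6})]: the [k]-th [c]-derivative of [f] is [t^{2k}] times a power series
   in [t^2 r^2] dominated by [cosh (t r)].  Squaring, integrating over [[-1,1]^n] and using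
   [e^{-t |xi|^2} <= prod_i 1 / (1 + t xi_i^2)], whose integral is at most [(pi / sqrt t)^n],
   yields [||m^1|| <= C t^{-n/4-l}]. *)

From Pilot Require Import Defs.
From Stdlib Require Import Reals List Lra Psatz Lia Factorial ClassicalEpsilon.
From Coquelicot Require Import Coquelicot.
Open Scope R_scope.

Lemma INR_fact_pos (n : nat) : 0 < INR (fact n).
Proof. apply lt_0_INR, lt_O_fact. Qed.

Lemma exp_le_exp (x y : R) : x <= y -> exp x <= exp y.
Proof. intros [H|H]; [apply Rlt_le, exp_increasing, H | subst; apply Rle_refl]. Qed.

Lemma INR_fact_double_S (n : nat) :
  INR (fact (2 * S n)) = (2 * INR n + 2) * (2 * INR n + 1) * INR (fact (2 * n)).
Proof.
  replace (2 * S n)%nat with (S (S (2 * n))) by lia.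
  rewrite !fact_simpl, !mult_INR, !S_INR, mult_INR; simpl; ring.
Qed.

Lemma cos_n_opp_pow (n : nat) (y : R) : cos_n n * (- y) ^ n = / INR (fact (2 * n)) * y ^ n.
Proof.
  unfold cos_n, Rdiv. replace (- y) with (-1 * y) by ring.
  rewrite Rpow_mult_distr.
  replace ((-1) ^ n * / INR (fact (2 * n)) * ((-1) ^ n * y ^ n))
    with ((-1 * -1) ^ n * / INR (fact (2 * n)) * y ^ n) by (rewrite Rpow_mult_distr; ring).
  replace (-1 * -1) with 1 by ring. rewrite pow1. ring.
Qed.

Lemma CV_radius_cos_n : CV_radius cos_n = p_infty.
Proof.
  apply CV_radius_infinite_DAlembert.
  - intro n; unfold cos_n, Rdiv.
    apply Rmult_integral_contrapositive_currified.
    + apply pow_nonzero; lra.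
    + apply Rinv_neq_0_compat, Rgt_not_eq, INR_fact_pos.
  - apply is_lim_seq_le_le with (u := fun _ => 0) (w := fun n => / INR (S n)).
    + intro n. pose proof (INR_fact_pos (2 * n)). pose proof (pos_INR n).
      unfold cos_n. rewrite INR_fact_double_S, S_INR.
      replace ((-1) ^ S n / ((2 * INR n + 2) * (2 * INR n + 1) * INR (fact (2 * n)))
               / ((-1) ^ n / INR (fact (2 * n))))
        with (- / ((2 * INR n + 2) * (2 * INR n + 1)))
        by (cbn [pow]; field; repeat split; try apply pow_nonzero; lra).
      rewrite Rabs_Ropp, Rabs_right by (apply Rle_ge, Rlt_le, Rinv_0_lt_compat; nra).
      split; [apply Rlt_le, Rinv_0_lt_compat; nra | apply Rinv_le_contravar; nra].
    + apply is_lim_seq_const.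
    + apply (is_lim_seq_incr_1 (fun n => / INR n) 0).
      replace (Finite 0) with (Rbar_inv p_infty) by reflexivity.
      apply is_lim_seq_inv; [apply is_lim_seq_INR | discriminate].
Qed.

(* [cos (t sqrt z)] is the power series [sum_n (-1)^n (t^2 z)^n / (2n)!]; its
   k-th derivative has coefficients [iter k PS_derive cos_n]. *)
Definition cosqrt_coef (k : nat) : nat -> R := Nat.iter k PS_derive cos_n.
Definition cosqrt_series (k : nat) (y : R) : R := PSeries (cosqrt_coef k) y.

Lemma CV_radius_cosqrt_coef (k : nat) : CV_radius (cosqrt_coef k) = p_infty.
Proof.
  induction k as [|k IH]; [exact CV_radius_cos_n|].
  simpl. rewrite CV_radius_derive. exact IH.
Qed.

Lemma derivable_pt_lim_cosqrt_series (k : nat) (y : R) :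
  derivable_pt_lim (cosqrt_series k) y (cosqrt_series (S k) y).
Proof.
  apply is_derive_Reals, is_derive_PSeries.
  rewrite CV_radius_cosqrt_coef. exact I.
Qed.

Lemma Rabs_cosqrt_coef_le (k n : nat) : Rabs (cosqrt_coef k n) <= / INR (fact (2 * n)).
Proof.
  revert n; induction k as [|k IH]; intro n.
  - change (cosqrt_coef 0 n) with (cos_n n). unfold cos_n, Rdiv.
    rewrite Rabs_mult, pow_1_abs, Rabs_right; [lra|].
    apply Rle_ge, Rlt_le, Rinv_0_lt_compat, INR_fact_pos.
  - change (cosqrt_coef (S k) n) with (INR (S n) * cosqrt_coef k (S n)).
    rewrite Rabs_mult, Rabs_right by (apply Rle_ge, pos_INR).
    apply Rle_trans with (INR (S n) * / INR (fact (2 * S n))).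
    { apply Rmult_le_compat_l; [apply pos_INR | apply IH]. }
    pose proof (INR_fact_pos (2 * n)). pose proof (pos_INR n).
    rewrite INR_fact_double_S, S_INR.
    replace ((INR n + 1) * / ((2 * INR n + 2) * (2 * INR n + 1) * INR (fact (2 * n))))
      with (/ (2 * (2 * INR n + 1)) * / INR (fact (2 * n))) by (field; lra).
    rewrite <- (Rmult_1_l (/ INR (fact (2 * n)))) at 2.
    apply Rmult_le_compat_r; [apply Rlt_le, Rinv_0_lt_compat; lra|].
    rewrite <- Rinv_1. apply Rinv_le_contravar; lra.
Qed.

Lemma is_pseries_cos (x : R) : is_pseries cos_n (x ^ 2) (cos x).
Proof.
  apply is_pseries_R, is_series_Reals. unfold cos.
  destruct (exist_cos (Rsqr x)) as [l Hl].
  replace (x ^ 2) with (Rsqr x) by (unfold Rsqr; ring). exact Hl.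
Qed.

(* Split [exp (+-x) = sum x^n/n!] into even and odd parts; the odd parts cancel. *)
Lemma is_pseries_cosh (x : R) : is_pseries cos_n (- x ^ 2) (cosh x).
Proof.
  set (a := fun n => / INR (fact n)).
  assert (Ha : forall n, 0 <= a n) by (intro n; apply Rlt_le, Rinv_0_lt_compat, INR_fact_pos).
  assert (Hexists : forall m : nat -> nat, (forall n, (2 * n <= m n)%nat) ->
            ex_pseries (fun n => a (m n)) (x ^ 2)).
  { intros m Hm. apply ex_pseries_R.
    apply (@ex_series_le R_AbsRing R_CompleteNormedModule _
             (fun n => Rabs (cos_n n * (- x ^ 2) ^ n))).
    - intro n. change norm with Rabs. simpl norm.
      rewrite cos_n_opp_pow, !Rabs_mult, (Rabs_right (a _)), (Rabs_right (/ _)) by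
        (apply Rle_ge; try apply Ha; apply Rlt_le, Rinv_0_lt_compat, INR_fact_pos).
      apply Rmult_le_compat_r; [apply Rabs_pos|].
      apply Rinv_le_contravar; [apply INR_fact_pos|]. apply le_INR, fact_le, Hm.
    - apply CV_disk_inside. rewrite CV_radius_cos_n. exact I. }
  destruct (Hexists (fun n => 2 * n)%nat ltac:(intros; cbv beta; lia)) as [even He].
  destruct (Hexists (fun n => 2 * n + 1)%nat ltac:(intros; cbv beta; lia)) as [odd Ho].
  assert (Hp := is_pseries_odd_even a x _ _ He Ho).
  replace (x ^ 2) with ((- x) ^ 2) in He, Ho by ring.
  assert (Hm := is_pseries_odd_even a (- x) _ _ He Ho).
  assert (Hcosh : cosh x = even).
  { unfold cosh.
    rewrite <- (is_pseries_unique _ _ _ (is_exp_Reals x)), <- (is_pseries_unique _ _ _ (is_exp_Reals (- x))).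
    fold a. rewrite (is_pseries_unique _ _ _ Hp), (is_pseries_unique _ _ _ Hm). field. }
  rewrite Hcosh. replace ((- x) ^ 2) with (x ^ 2) in He by ring.
  apply is_pseries_R in He. apply is_pseries_R.
  eapply is_series_ext; [|exact He]. intro n. cbv beta.
  rewrite cos_n_opp_pow. reflexivity.
Qed.

Lemma cosqrt_eq_series (t z : R) : cosqrt t z = cosqrt_series 0 (t ^ 2 * z).
Proof.
  unfold cosqrt, cosqrt_series; simpl cosqrt_coef.
  destruct (Rle_dec 0 z) as [Hz|Hz]; symmetry; apply is_pseries_unique.
  - replace (t ^ 2 * z) with ((t * sqrt z) ^ 2) by (rewrite Rpow_mult_distr, pow2_sqrt; lra).
    apply is_pseries_cos.
  - replace (t ^ 2 * z) with (- (t * sqrt (- z)) ^ 2) by (rewrite Rpow_mult_distr, pow2_sqrt; lra).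
    apply is_pseries_cosh.
Qed.

Lemma Rabs_cosqrt_series_le (k : nat) (y : R) : 0 <= y -> Rabs (cosqrt_series k y) <= exp (sqrt y).
Proof.
  intro Hy. unfold cosqrt_series, PSeries.
  assert (Hin : forall a, CV_radius a = p_infty -> Rbar_lt (Rabs y) (CV_radius a))
    by (intros a ->; exact I).
  eapply Rle_trans.
  { apply Series_Rabs, (CV_disk_inside _ _ (Hin _ (CV_radius_cosqrt_coef k))). }
  assert (Hcosh := is_pseries_cosh (sqrt y)). rewrite pow2_sqrt in Hcosh by lra.
  eapply Rle_trans.
  { apply Series_le with (b := fun n => cos_n n * (- y) ^ n).
    - intro n. split; [apply Rabs_pos|].
      rewrite cos_n_opp_pow, Rabs_mult, <- RPow_abs, (Rabs_right y) by lra.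
      apply Rmult_le_compat_r; [apply pow_le; lra | apply Rabs_cosqrt_coef_le].
    - apply ex_pseries_R. eexists. exact Hcosh. }
  apply is_pseries_R in Hcosh. rewrite (is_series_unique _ _ Hcosh). unfold cosh.
  assert (exp (- sqrt y) <= exp (sqrt y)) by (apply exp_le_exp; pose proof (sqrt_pos y); lra).
  lra.
Qed.

Lemma deriv_of_derivable_pt_lim (f : R -> R) (x l : R) :
  derivable_pt_lim f x l -> deriv f x = l.
Proof.
  intro H. unfold deriv. destruct (excluded_middle_informative _) as [E|E].
  - destruct (constructive_indefinite_description _ E) as [l' H']. simpl.
    exact (uniqueness_limite f x l' l H' H).
  - exfalso. apply E. exists l. exact H.
Qed.

Lemma derivable_pt_lim_locally_ext (f g : R -> R) (x l d : R) : 0 < d ->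
  (forall y, Rabs (y - x) < d -> f y = g y) ->
  derivable_pt_lim f x l -> derivable_pt_lim g x l.
Proof.
  intros Hd Heq H eps Heps.
  destruct (H eps Heps) as [del Hdel].
  assert (Hm : 0 < Rmin del d) by (apply Rmin_pos; [apply del | lra]).
  exists (mkposreal _ Hm). intros h Hh0 Hh. simpl in Hh.
  rewrite <- !Heq.
  - apply Hdel; [exact Hh0 | eapply Rlt_le_trans; [exact Hh | apply Rmin_l]].
  - rewrite Rminus_diag, Rabs_R0. exact Hd.
  - replace (x + h - x) with h by ring. eapply Rlt_le_trans; [exact Hh | apply Rmin_r].
Qed.

Lemma nth_deriv_of_family (F : nat -> R -> R) (f : R -> R) (a b : R) :
  (forall x, a < x < b -> f x = F 0%nat x) ->
  (forall k x, a < x < b -> derivable_pt_lim (F k) x (F (S k) x)) ->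
  forall k x, a < x < b -> nth_deriv k f x = F k x.
Proof.
  intros H0 HD k. induction k as [|k IH]; intros x Hx; [exact (H0 x Hx)|].
  change (nth_deriv (S k) f x) with (deriv (nth_deriv k f) x).
  apply deriv_of_derivable_pt_lim.
  apply derivable_pt_lim_locally_ext with (F k) (Rmin (x - a) (b - x)).
  - apply Rmin_pos; lra.
  - intros y Hy. symmetry. apply IH.
    pose proof (Rmin_l (x - a) (b - x)). pose proof (Rmin_r (x - a) (b - x)).
    apply Rabs_def2 in Hy. lra.
  - exact (HD k x Hx).
Qed.

Lemma nth_deriv_f_fun (r t : R) (k : nat) :
  nth_deriv k (fun c => f_fun r c t) 0 = (- t ^ 2) ^ k * cosqrt_series k (t ^ 2 * r ^ 2).
Proof.
  rewrite (nth_deriv_of_family (fun k c => (- t ^ 2) ^ k * cosqrt_series k (t ^ 2 * (r ^ 2 - c)))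
             _ (-1) 1); [now rewrite Rminus_0_r | | | lra].
  - intros c _. unfold f_fun. rewrite cosqrt_eq_series. simpl. ring.
  - intros j c _.
    assert (Hin : derivable_pt_lim (fun c => t ^ 2 * (r ^ 2 - c)) c (- t ^ 2)).
    { apply is_derive_Reals. auto_derive; [exact I | ring]. }
    assert (H := derivable_pt_lim_scal _ ((- t ^ 2) ^ j) _ _
                   (derivable_pt_lim_comp _ _ _ _ _ Hin (derivable_pt_lim_cosqrt_series j _))).
    replace ((- t ^ 2) ^ S j * cosqrt_series (S j) (t ^ 2 * (r ^ 2 - c)))
      with ((- t ^ 2) ^ j * (cosqrt_series (S j) (t ^ 2 * (r ^ 2 - c)) * - t ^ 2)) by (simpl; ring).
    exact H.
Qed.

Lemma Rabs_nth_deriv_f_fun_le (r t : R) (k : nat) : 0 <= r -> 0 <= t ->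
  Rabs (nth_deriv k (fun c => f_fun r c t) 0) <= t ^ (2 * k) * exp (t * r).
Proof.
  intros Hr Ht. rewrite nth_deriv_f_fun, Rabs_mult, <- RPow_abs, Rabs_Ropp,
    Rabs_right, <- pow_mult by (apply Rle_ge, pow_le; lra).
  apply Rmult_le_compat_l; [apply pow_le; lra|].
  eapply Rle_trans; [apply Rabs_cosqrt_series_le; apply Rmult_le_pos; apply pow_le; lra|].
  rewrite <- Rpow_mult_distr, sqrt_pow2 by (apply Rmult_le_pos; lra). apply Rle_refl.
Qed.

Lemma sumk_ext (n : nat) (A B : nat -> R) : (forall k, A k = B k) -> sumk n A = sumk n B.
Proof. intro H. induction n as [|n IH]; simpl; [reflexivity | now rewrite IH, H]. Qed.

Lemma Rabs_sumk_le (n : nat) (A : nat -> R) (K : R) :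
  (forall k, (k < n)%nat -> Rabs (A k) <= K) -> Rabs (sumk n A) <= INR n * K.
Proof.
  induction n as [|n IH]; intro H; simpl sumk.
  - rewrite Rabs_R0. simpl. lra.
  - rewrite S_INR. eapply Rle_trans; [apply Rabs_triang|].
    assert (Rabs (sumk n A) <= INR n * K) by (apply IH; intros; apply H; lia).
    assert (Rabs (A n) <= K) by (apply H; lia). lra.
Qed.

Lemma Rabs_W1_le (b : nat) (r t : R) : 0 <= r <= / 3 -> 1 <= t ->
  Rabs (W1 b r t) <= INR b * (t ^ (2 * b) * exp (t / 3)).
Proof.
  intros Hr Ht. apply Rabs_sumk_le. intros k Hk.
  assert (Hinv4 : 0 <= (/ 4) ^ k <= 1).
  { split; [apply pow_le; lra|]. rewrite <- (pow1 k). apply pow_incr. lra. }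
  assert (Hinvfact : 0 < / INR (fact k) <= 1).
  { assert (1 <= INR (fact k)) by exact (le_INR 1 _ (lt_O_fact k)).
    split; [apply Rinv_0_lt_compat; lra|].
    rewrite <- Rinv_1. apply Rinv_le_contravar; lra. }
  assert (Hderiv : Rabs (nth_deriv k (fun c => f_fun r c t) 0) <= t ^ (2 * b) * exp (t / 3)).
  { eapply Rle_trans; [apply Rabs_nth_deriv_f_fun_le; lra|].
    apply Rmult_le_compat; [apply pow_le; lra | apply Rlt_le, exp_pos | |].
    - apply Rle_pow; [lra | lia].
    - apply exp_le_exp. nra. }
  rewrite !Rabs_mult, (Rabs_right ((/ 4) ^ k)), (Rabs_right (/ _)) by lra.
  pose proof (Rabs_pos (nth_deriv k (fun c => f_fun r c t) 0)).
  replace (t ^ (2 * b) * exp (t / 3)) with (1 * 1 * (t ^ (2 * b) * exp (t / 3))) by ring.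
  apply Rmult_le_compat; try apply Rmult_le_compat; try apply Rmult_le_pos; lra.
Qed.

Definition taylor_poly (l : nat) (F : nat -> R -> R) (x : R) : R :=
  sumk l (fun k => F k 0 * x ^ k / INR (fact k)).

Lemma taylor_poly_at_0 (l : nat) (F : nat -> R -> R) : taylor_poly (S l) F 0 = F 0%nat 0.
Proof.
  induction l as [|l IH]; [unfold taylor_poly; simpl; field|].
  change (taylor_poly (S (S l)) F 0)
    with (taylor_poly (S l) F 0 + F (S l) 0 * 0 ^ S l / INR (fact (S l))).
  rewrite IH, pow_i by lia. unfold Rdiv. ring.
Qed.

Lemma derivable_pt_lim_taylor_poly (l : nat) (F : nat -> R -> R) (x : R) :
  derivable_pt_lim (taylor_poly (S l) F) x (taylor_poly l (fun k => F (S k)) x).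
Proof.
  revert F. induction l as [|l IH]; intro F.
  - unfold taylor_poly; simpl sumk.
    apply derivable_pt_lim_locally_ext with (fun _ => F 0%nat 0) 1;
      [lra | intros; simpl; field | apply derivable_pt_lim_const].
  - assert (Hmon := derivable_pt_lim_scal _ (F (S l) 0 / INR (fact (S l))) x _
                      (derivable_pt_lim_pow x (S l))).
    assert (H := derivable_pt_lim_plus _ _ x _ _ (IH F) Hmon).
    replace (taylor_poly (S l) (fun k => F (S k)) x)
      with (taylor_poly l (fun k => F (S k)) x
            + F (S l) 0 / INR (fact (S l)) * (INR (S l) * x ^ pred (S l))).
    + apply derivable_pt_lim_locally_ext with (d := 1) (3 := H); [lra|].
      intros y _. unfold taylor_poly, plus_fct, mult_real_fct. cbn [sumk]. unfold Rdiv. ring.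
    + unfold taylor_poly. simpl sumk. rewrite fact_simpl, mult_INR. simpl pred.
      pose proof (INR_fact_pos l). rewrite S_INR. pose proof (pos_INR l). field. lra.
Qed.

Lemma taylor_remainder_le (l : nat) (F : nat -> R -> R) (M : R) :
  (forall k x, -1 < x < 2 -> derivable_pt_lim (F k) x (F (S k) x)) ->
  (forall x, 0 <= x <= 1 -> Rabs (F l x) <= M) ->
  forall x, 0 <= x <= 1 -> Rabs (F 0%nat x - taylor_poly l F x) <= M.
Proof.
  revert F M. induction l as [|l IH]; intros F M HD HB x Hx.
  { unfold taylor_poly. simpl sumk. rewrite Rminus_0_r. exact (HB x Hx). }
  assert (HM : 0 <= M) by (eapply Rle_trans; [apply Rabs_pos | apply (HB 0); lra]).
  set (D := fun y => F 0%nat y - taylor_poly (S l) F y).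
  set (D' := fun y => F 1%nat y - taylor_poly l (fun k => F (S k)) y).
  assert (HD0 : D 0 = 0) by (unfold D; rewrite taylor_poly_at_0; ring).
  assert (HDD : forall c, 0 <= c <= x -> derivable_pt_lim D c (D' c)).
  { intros c Hc. apply derivable_pt_lim_minus; [apply HD; lra|].
    apply derivable_pt_lim_taylor_poly. }
  assert (HD' : forall c, 0 <= c <= 1 -> Rabs (D' c) <= M).
  { intros c Hc. apply (IH (fun k => F (S k))); [intros; apply HD | |]; auto. }
  change (Rabs (D x) <= M).
  destruct (Req_dec x 0) as [->|Hx0]; [rewrite HD0, Rabs_R0; exact HM|].
  destruct (MVT_cor2 D D' 0 x ltac:(lra) HDD) as [c [Hc Hcx]].
  rewrite HD0, !Rminus_0_r in Hc. rewrite Hc, Rabs_mult, (Rabs_right x) by lra.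
  assert (Rabs (D' c) <= M) by (apply HD'; lra).
  pose proof (Rabs_pos (D' c)). nra.
Qed.

(* With [u = r^2] and [s = t r^2] one has [g(r,a,t) = exp (- s h(a))], where
   [h(a) = 2 / (1 + w(a))] and [w(a) = sqrt (1 - 4 a u)]. *)
Definition g_root (u a : R) : R := sqrt (1 - 4 * a * u).
Definition g_ratio (u a : R) : R := 2 / (1 + g_root u a).
Definition g_exp (u s a : R) : R := exp (- s * g_ratio u a).

Lemma g_fun_eq_g_exp (r a t : R) : g_fun r a t = g_exp (r ^ 2) (t * r ^ 2) a.
Proof. unfold g_fun, g_exp, g_ratio, g_root. f_equal. unfold Rdiv. ring. Qed.

Section GDerivatives.

Variables u s : R.

Ltac normalize_sqrt_arg := repeat match goal with
  |- context [sqrt (1 + - ?x)] => replace (1 + - x) with (1 - x) by ring end.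

Lemma derivable_pt_lim_g_ratio (a : R) : 0 < 1 - 4 * a * u ->
  derivable_pt_lim (g_ratio u) a (u * g_ratio u a ^ 2 * / g_root u a).
Proof.
  intro H. assert (0 < g_root u a) by (apply sqrt_lt_R0; exact H).
  apply is_derive_Reals. unfold g_ratio, g_root in *.
  auto_derive; [repeat split; normalize_sqrt_arg; lra | normalize_sqrt_arg; field; lra].
Qed.

Lemma derivable_pt_lim_inv_g_root (a : R) : 0 < 1 - 4 * a * u ->
  derivable_pt_lim (fun a => / g_root u a) a (2 * u * (/ g_root u a) ^ 3).
Proof.
  intro H. assert (0 < g_root u a) by (apply sqrt_lt_R0; exact H).
  apply is_derive_Reals. unfold g_root in *.
  auto_derive; [repeat split; normalize_sqrt_arg; lra | normalize_sqrt_arg; field; lra].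
Qed.

(* The derivatives of [g_exp] are sums of monomials
   [c s^i h^j w^-m g_exp], encoded as [(c, i, j, m)]. *)
Definition g_monomial : Type := R * nat * nat * nat.

Definition eval_monomial (M : g_monomial) (a : R) : R :=
  let '(c, i, j, m) := M in
  c * s ^ i * g_ratio u a ^ j * (/ g_root u a) ^ m * g_exp u s a.

Definition eval_monomials (L : list g_monomial) (a : R) : R :=
  fold_right (fun M acc => eval_monomial M a + acc) 0 L.

(* The derivative of a monomial, divided by [u]. *)
Definition deriv_monomial (M : g_monomial) : list g_monomial :=
  let '(c, i, j, m) := M in
  (c * INR j, i, S j, S m) :: (2 * INR m * c, i, j, S (S m))
    :: (- c, S i, S (S j), S m) :: nil.

Definition deriv_monomials (L : list g_monomial) : list g_monomial :=
  flat_map deriv_monomial L.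

Lemma derivable_pt_lim_eval_monomial (M : g_monomial) (a : R) : 0 < 1 - 4 * a * u ->
  derivable_pt_lim (eval_monomial M) a (u * eval_monomials (deriv_monomial M) a).
Proof.
  intro H. destruct M as [[[c i] j] m].
  assert (Hpow := fun f f' j (Hf : derivable_pt_lim f a f') =>
                    derivable_pt_lim_comp f (fun x => x ^ j) a _ _ Hf (derivable_pt_lim_pow _ j)).
  assert (Hexp := derivable_pt_lim_comp _ exp a _ _
                    (derivable_pt_lim_scal _ (- s) a _ (derivable_pt_lim_g_ratio a H))
                    (derivable_pt_lim_exp _)).
  assert (Hall := derivable_pt_lim_mult _ _ a _ _
    (derivable_pt_lim_mult _ _ a _ _
       (derivable_pt_lim_scal _ (c * s ^ i) a _ (Hpow _ _ j (derivable_pt_lim_g_ratio a H)))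
       (Hpow _ _ m (derivable_pt_lim_inv_g_root a H)))
    Hexp).
  eapply derivable_pt_lim_locally_ext with (d := 1) in Hall;
    [| lra | intros; unfold eval_monomial, g_exp, mult_fct, mult_real_fct, comp; reflexivity].
  match goal with Hall : derivable_pt_lim _ a ?l |- derivable_pt_lim _ a ?l' =>
    replace l' with l; [exact Hall|] end.
  unfold eval_monomials, deriv_monomial, eval_monomial, g_exp, comp, mult_real_fct, mult_fct.
  cbn [fold_right].
  destruct j as [|j]; destruct m as [|m]; cbn [pred pow]; change (INR 0) with 0; ring.
Qed.

Lemma eval_monomials_app (L1 L2 : list g_monomial) (a : R) :
  eval_monomials (L1 ++ L2) a = eval_monomials L1 a + eval_monomials L2 a.
Proof. induction L1 as [|M L1 IH]; simpl; [ring|]. unfold eval_monomials in *. rewrite IH. ring. Qed.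

Lemma derivable_pt_lim_eval_monomials (L : list g_monomial) (a : R) : 0 < 1 - 4 * a * u ->
  derivable_pt_lim (eval_monomials L) a (u * eval_monomials (deriv_monomials L) a).
Proof.
  intro H. induction L as [|M L IH].
  - replace (u * eval_monomials (deriv_monomials nil) a) with 0 by (simpl; ring).
    apply derivable_pt_lim_const.
  - unfold deriv_monomials. simpl flat_map. rewrite eval_monomials_app, Rmult_plus_distr_l.
    exact (derivable_pt_lim_plus _ _ a _ _ (derivable_pt_lim_eval_monomial M a H) IH).
Qed.

Definition g_monomials (k : nat) : list g_monomial :=
  Nat.iter k deriv_monomials ((1, 0%nat, 0%nat, 0%nat) :: nil).

Definition g_exp_deriv (k : nat) (a : R) : R := u ^ k * eval_monomials (g_monomials k) a.

Lemma g_exp_deriv_0 (a : R) : g_exp_deriv 0 a = g_exp u s a.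
Proof. unfold g_exp_deriv, g_monomials, eval_monomials, eval_monomial. simpl. ring. Qed.

Lemma derivable_pt_lim_g_exp_deriv (k : nat) (a : R) : 0 <= u <= / 9 -> -1 < a < 2 ->
  derivable_pt_lim (g_exp_deriv k) a (g_exp_deriv (S k) a).
Proof.
  intros Hu Ha. unfold g_exp_deriv.
  assert (H := derivable_pt_lim_scal _ (u ^ k) a _
                 (derivable_pt_lim_eval_monomials (g_monomials k) a ltac:(nra))).
  replace (u ^ S k * eval_monomials (g_monomials (S k)) a)
    with (u ^ k * (u * eval_monomials (deriv_monomials (g_monomials k)) a)) by (simpl; ring).
  exact H.
Qed.

(* [2] bounds both [h] and [1/w] for [0 <= a <= 1], whence the weight [sum |c| 2^j 2^m];
   the degree is the total power of [s]. *)
Definition monomials_weight (L : list g_monomial) : R :=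
  fold_right (fun M acc => let '(c, i, j, m) := M in Rabs c * 2 ^ j * 2 ^ m + acc) 0 L.

Definition monomials_degree (L : list g_monomial) : nat :=
  fold_right (fun M acc => let '(c, i, j, m) := M in (i + acc)%nat) 0%nat L.

Lemma monomials_weight_nonneg (L : list g_monomial) : 0 <= monomials_weight L.
Proof.
  induction L as [|[[[c i] j] m] L IH]; simpl; [lra|].
  pose proof (Rabs_pos c). pose proof (pow_le 2 j). pose proof (pow_le 2 m).
  assert (0 <= Rabs c * 2 ^ j * 2 ^ m) by (repeat apply Rmult_le_pos; lra). lra.
Qed.

Hypotheses (Hu : 0 <= u <= / 9) (Hs : 0 <= s).

Lemma g_factors_bounds (a : R) : 0 <= a <= 1 ->
  0 <= / g_root u a <= 2 /\ 0 <= g_ratio u a <= 2 /\ 0 <= g_exp u s a <= exp (- s).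
Proof.
  intro Ha.
  assert (Hw : / 2 <= g_root u a <= 1).
  { unfold g_root. split.
    - rewrite <- (sqrt_pow2 (/ 2)) by lra. apply sqrt_le_1_alt. nra.
    - apply Rle_trans with (sqrt 1); [apply sqrt_le_1_alt; nra | rewrite sqrt_1; lra]. }
  split; [|split].
  - split; [apply Rlt_le, Rinv_0_lt_compat; lra|].
    rewrite <- (Rinv_inv 2). apply Rinv_le_contravar; lra.
  - unfold g_ratio. split; [apply Rdiv_le_0_compat; lra | apply Rle_div_l; lra].
  - unfold g_exp. split; [apply Rlt_le, exp_pos|]. apply exp_le_exp.
    assert (1 <= g_ratio u a) by (unfold g_ratio; apply Rle_div_r; lra). nra.
Qed.

Lemma Rabs_eval_monomials_le (L : list g_monomial) (a : R) : 0 <= a <= 1 ->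
  Rabs (eval_monomials L a)
  <= monomials_weight L * (1 + s) ^ monomials_degree L * exp (- s).
Proof.
  intro Ha. destruct (g_factors_bounds a Ha) as [Hw [Hh Hp]].
  induction L as [|[[[c i] j] m] L IH]; [simpl; rewrite Rabs_R0; lra|].
  cbn [eval_monomials fold_right monomials_weight monomials_degree].
  fold (eval_monomials L a) (monomials_weight L) (monomials_degree L) in *.
  set (N := monomials_degree L) in *.
  assert (HN : (1 + s) ^ N <= (1 + s) ^ (i + N)) by (apply Rle_pow; [lra | lia]).
  assert (Hi : s ^ i <= (1 + s) ^ (i + N)).
  { apply Rle_trans with ((1 + s) ^ i); [apply pow_incr; lra | apply Rle_pow; [lra | lia]]. }
  assert (Hmon : Rabs (eval_monomial (c, i, j, m) a)
                 <= Rabs c * 2 ^ j * 2 ^ m * (1 + s) ^ (i + N) * exp (- s)).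
  { unfold eval_monomial.
    rewrite !Rabs_mult, <- !RPow_abs, (Rabs_right s), (Rabs_right (g_ratio u a)),
      (Rabs_right (/ g_root u a)), (Rabs_right (g_exp u s a)) by lra.
    pose proof (Rabs_pos c). pose proof (pow_le s i Hs).
    pose proof (pow_le _ j (proj1 Hh)). pose proof (pow_le _ m (proj1 Hw)).
    assert (g_ratio u a ^ j <= 2 ^ j) by (apply pow_incr; lra).
    assert ((/ g_root u a) ^ m <= 2 ^ m) by (apply pow_incr; lra).
    replace (Rabs c * 2 ^ j * 2 ^ m * (1 + s) ^ (i + N) * exp (- s))
      with (Rabs c * (1 + s) ^ (i + N) * 2 ^ j * 2 ^ m * exp (- s)) by ring.
    repeat apply Rmult_le_compat; repeat apply Rmult_le_pos; lra. }
  assert (monomials_weight L * (1 + s) ^ N * exp (- s)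
          <= monomials_weight L * (1 + s) ^ (i + N) * exp (- s)).
  { apply Rmult_le_compat_r; [apply Rlt_le, exp_pos|].
    apply Rmult_le_compat_l; [apply monomials_weight_nonneg | exact HN]. }
  eapply Rle_trans; [apply Rabs_triang | lra].
Qed.

End GDerivatives.

Lemma nth_deriv_g_fun (r t : R) (k : nat) : 0 <= r <= / 3 ->
  nth_deriv k (fun a => g_fun r a t) 0 = g_exp_deriv (r ^ 2) (t * r ^ 2) k 0.
Proof.
  intro Hr. apply (nth_deriv_of_family _ _ (-1) 2); [| | lra].
  - intros a _. rewrite g_exp_deriv_0. apply g_fun_eq_g_exp.
  - intros j a Ha. apply derivable_pt_lim_g_exp_deriv; [split; nra | exact Ha].
Qed.

Lemma D1_eq_taylor_poly (l : nat) (r t : R) : 0 <= r <= / 3 ->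
  D1 l r t = / 2 * taylor_poly l (g_exp_deriv (r ^ 2) (t * r ^ 2)) 1.
Proof.
  intro Hr. unfold D1, taylor_poly. f_equal. apply sumk_ext. intro k.
  rewrite nth_deriv_g_fun, pow1 by exact Hr. field. apply Rgt_not_eq, INR_fact_pos.
Qed.

Lemma pow_le_exp_half (p : nat) (x : R) : 0 <= x ->
  (1 + x) ^ p <= (2 * INR p + 2) ^ p * exp (x / 2).
Proof.
  intro Hx. pose proof (pos_INR p) as Hp.
  set (y := x / (2 * INR p + 2)).
  assert (Hy : 0 <= y) by (apply Rdiv_le_0_compat; lra).
  apply Rle_trans with (((2 * INR p + 2) * (1 + y)) ^ p).
  { apply pow_incr. split; [lra|]. unfold y. field_simplify; lra. }
  rewrite Rpow_mult_distr. apply Rmult_le_compat_l; [apply pow_le; lra|].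
  apply Rle_trans with (exp y ^ p); [apply pow_incr; split; [lra | apply exp_ineq1_le]|].
  rewrite <- Rpower_pow by apply exp_pos. unfold Rpower. rewrite ln_exp.
  apply exp_le_exp. unfold y.
  apply Rle_trans with (INR p * x / (2 * INR p + 2)); [right; field; lra|].
  apply Rle_div_l; nra.
Qed.

(* Where the decay [t^-l] comes from: [u^l = (t u)^l / t^l] and
   [(t u)^l (1 + t u)^N exp (- t u) <= C exp (- t u / 2)]. *)
Definition D1_remainder_const (l : nat) : R :=
  let N := (l + monomials_degree (g_monomials l))%nat in
  monomials_weight (g_monomials l) * (2 * INR N + 2) ^ N.

Lemma D1_remainder_const_nonneg (l : nat) : 0 <= D1_remainder_const l.
Proof.
  apply Rmult_le_pos; [apply monomials_weight_nonneg|].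
  apply pow_le. pose proof (pos_INR (l + monomials_degree (g_monomials l))). lra.
Qed.

Lemma Rabs_g_fun_sub_D1_le (l : nat) (r t : R) : 0 <= r <= / 3 -> 1 <= t ->
  Rabs (g_fun r 1 t - 2 * D1 l r t)
  <= D1_remainder_const l * / t ^ l * exp (- (t * r ^ 2) / 2).
Proof.
  intros Hr Ht.
  set (u := r ^ 2). set (s := t * u). set (L := g_monomials l).
  set (N := monomials_degree L).
  assert (Hu : 0 <= u <= / 9) by (unfold u; split; nra).
  assert (Hs : 0 <= s) by (unfold s; nra).
  assert (Htl : 0 < t ^ l) by (apply pow_lt; lra).
  assert (Htaylor : Rabs (g_fun r 1 t - 2 * D1 l r t)
                    <= u ^ l * (monomials_weight L * (1 + s) ^ N * exp (- s))).
  { rewrite D1_eq_taylor_poly, g_fun_eq_g_exp by exact Hr. fold u s.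
    rewrite <- (g_exp_deriv_0 u s 1).
    replace (2 * (/ 2 * taylor_poly l (g_exp_deriv u s) 1)) with (taylor_poly l (g_exp_deriv u s) 1)
      by field.
    apply taylor_remainder_le; [intros; apply derivable_pt_lim_g_exp_deriv; assumption | | lra].
    intros a Ha. unfold g_exp_deriv. rewrite Rabs_mult, <- RPow_abs, (Rabs_right u) by lra.
    apply Rmult_le_compat_l; [apply pow_le; lra | apply Rabs_eval_monomials_le; assumption]. }
  eapply Rle_trans; [exact Htaylor|].
  assert (Hsl : s ^ l * (1 + s) ^ N <= (2 * INR (l + N) + 2) ^ (l + N) * exp (s / 2)).
  { eapply Rle_trans; [|apply pow_le_exp_half; exact Hs].
    rewrite pow_add. apply Rmult_le_compat_r; [apply pow_le; lra | apply pow_incr; lra]. }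
  assert (Hexp : exp (s / 2) * exp (- s) = exp (- s / 2)) by (rewrite <- exp_plus; f_equal; field).
  assert (Hul : u ^ l = s ^ l * / t ^ l) by (unfold s; rewrite Rpow_mult_distr; field; lra).
  pose proof (monomials_weight_nonneg L). pose proof (exp_pos (- s)).
  pose proof (Rinv_0_lt_compat _ Htl).
  unfold D1_remainder_const. fold L N. rewrite Hul, <- Hexp.
  replace (s ^ l * / t ^ l * (monomials_weight L * (1 + s) ^ N * exp (- s)))
    with (monomials_weight L * / t ^ l * exp (- s) * (s ^ l * (1 + s) ^ N)) by ring.
  replace (monomials_weight L * (2 * INR (l + N) + 2) ^ (l + N) * / t ^ l * (exp (s / 2) * exp (- s)))
    with (monomials_weight L * / t ^ l * exp (- s) * ((2 * INR (l + N) + 2) ^ (l + N) * exp (s / 2)))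
    by ring.
  apply Rmult_le_compat_l; [repeat apply Rmult_le_pos; lra | exact Hsl].
Qed.

Lemma exp_cosqrt_split (r t : R) : 0 <= r <= / 3 ->
  exp (- t / 2) * cosqrt t (r ^ 2 - / 4)
  = (g_fun r 1 t + exp (- t / 2 - t * sqrt (/ 4 - r ^ 2))) / 2.
Proof.
  intro Hr. unfold cosqrt. destruct (Rle_dec 0 (r ^ 2 - / 4)) as [H|_]; [exfalso; nra|].
  replace (- (r ^ 2 - / 4)) with (/ 4 - r ^ 2) by ring.
  set (sg := sqrt (/ 4 - r ^ 2)).
  assert (Hsg : 0 <= sg) by apply sqrt_pos.
  assert (Hsg2 : sg * sg = / 4 - r ^ 2) by (apply sqrt_sqrt; nra).
  assert (Hroot : sqrt (1 - 4 * 1 * r ^ 2) = 2 * sg).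
  { replace (1 - 4 * 1 * r ^ 2) with ((2 * 2) * (/ 4 - r ^ 2)) by field.
    rewrite sqrt_mult, sqrt_square by nra. reflexivity. }
  unfold g_fun, cosh. rewrite Hroot.
  replace (- (2 * t * r ^ 2) / (1 + 2 * sg)) with (- t / 2 + t * sg).
  2: { field_simplify_eq; [|lra]. replace (r ^ 2) with (/ 4 - sg * sg) by lra. field. }
  replace (- t / 2 - t * sg) with (- t / 2 + - (t * sg)) by ring.
  rewrite !exp_plus. field.
Qed.

Definition m1_small_part (b : nat) (t : R) : R :=
  exp (- t / 2) * (/ 2 + INR b * (t ^ (2 * b) * exp (t / 3))).

Lemma m1_small_part_nonneg (b : nat) (t : R) : 1 <= t -> 0 <= m1_small_part b t.
Proof.
  intro Ht. apply Rmult_le_pos; [apply Rlt_le, exp_pos|].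
  assert (0 <= INR b * (t ^ (2 * b) * exp (t / 3))).
  { apply Rmult_le_pos; [apply pos_INR | apply Rmult_le_pos; [apply pow_le; lra | apply Rlt_le, exp_pos]]. }
  lra.
Qed.

Lemma Rabs_m1_le (chi : R -> R) (X : R) (b l : nat) (r t : R) :
  (forall r, r >= / 3 -> chi r = 0) ->
  (forall r, 0 <= r <= / 3 -> Rabs (chi r) <= X) ->
  0 <= r -> 1 <= t ->
  Rabs (m1 chi b l r t)
  <= X * m1_small_part b t + X * (/ 2 * D1_remainder_const l * / t ^ l) * exp (- (t * r ^ 2) / 2).
Proof.
  intros Hchi0 HX Hr Ht.
  assert (HX0 : 0 <= X) by (eapply Rle_trans; [apply Rabs_pos | apply (HX 0); lra]).
  pose proof (m1_small_part_nonneg b t Ht). pose proof (D1_remainder_const_nonneg l).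
  assert (0 < / t ^ l) by (apply Rinv_0_lt_compat, pow_lt; lra).
  pose proof (exp_pos (- (t * r ^ 2) / 2)).
  assert (0 <= / 2 * D1_remainder_const l * / t ^ l)
    by (apply Rmult_le_pos; [apply Rmult_le_pos|]; lra).
  destruct (Rle_lt_dec (/ 3) r) as [Hr3|Hr3].
  { unfold m1. rewrite Hchi0, Rmult_0_l, Rabs_R0 by lra.
    apply Rplus_le_le_0_compat; [|apply Rmult_le_pos]; try apply Rmult_le_pos; lra. }
  set (sg := sqrt (/ 4 - r ^ 2)).
  assert (Hsmall : exp (- t / 2 - t * sg) <= exp (- t / 2)).
  { apply exp_le_exp. pose proof (sqrt_pos (/ 4 - r ^ 2)). fold sg in H4. nra. }
  assert (HW := Rabs_W1_le b r t ltac:(lra) Ht).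
  assert (HG := Rabs_g_fun_sub_D1_le l r t ltac:(lra) Ht).
  assert (Hsplit : exp (- t / 2) * cosqrt t (r ^ 2 - / 4) - exp (- t / 2) * W1 b r t - D1 l r t
                   = / 2 * (g_fun r 1 t - 2 * D1 l r t) + / 2 * exp (- t / 2 - t * sg)
                     - exp (- t / 2) * W1 b r t).
  { rewrite exp_cosqrt_split by lra. fold sg. field. }
  set (K := / 2 * D1_remainder_const l * / t ^ l) in *.
  replace (X * m1_small_part b t + X * K * exp (- (t * r ^ 2) / 2))
    with (X * (m1_small_part b t + K * exp (- (t * r ^ 2) / 2))) by ring.
  unfold m1. rewrite Hsplit, Rabs_mult.
  apply Rmult_le_compat; [apply Rabs_pos | apply Rabs_pos | apply HX; lra |].
  unfold m1_small_part.
  pose proof (exp_pos (- t / 2 - t * sg)). pose proof (exp_pos (- t / 2)).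
  eapply Rle_trans; [apply Rabs_triang|]. rewrite Rabs_Ropp.
  eapply Rle_trans; [apply Rplus_le_compat_r, Rabs_triang|].
  rewrite !Rabs_mult, (Rabs_right (/ 2)), (Rabs_right (exp (- t / 2 - t * sg))),
    (Rabs_right (exp (- t / 2))) by lra.
  assert (exp (- t / 2) * Rabs (W1 b r t) <= exp (- t / 2) * (INR b * (t ^ (2 * b) * exp (t / 3))))
    by (apply Rmult_le_compat_l; lra).
  unfold K. lra.
Qed.

Lemma RiemannInt_unit_nonneg (f : R -> R) (pr : Riemann_integrable f (-1) 1) :
  (forall x, -1 < x < 1 -> 0 <= f x) -> 0 <= RiemannInt pr.
Proof.
  intro H. pose proof (RiemannInt_P19 (RiemannInt_P14 (-1) 1 0) pr ltac:(lra) H) as P.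
  rewrite RiemannInt_P15 in P. lra.
Qed.

(* The junk value [0] of [Defs.RInt] on non-integrable functions is harmless here. *)
Lemma RInt_unit_le (f g : R -> R) (prg : Riemann_integrable g (-1) 1) :
  (forall x, -1 < x < 1 -> 0 <= f x <= g x) ->
  0 <= Defs.RInt f (-1) 1 <= RiemannInt prg.
Proof.
  intro H. unfold Defs.RInt. destruct (excluded_middle_informative _) as [E|E].
  - destruct (constructive_indefinite_description _ E) as [prf Hprf]. simpl. split.
    + apply RiemannInt_unit_nonneg. intros x Hx. apply H, Hx.
    + apply RiemannInt_P19; [lra | intros x Hx; apply H, Hx].
  - split; [lra|]. apply RiemannInt_unit_nonneg. intros x Hx. specialize (H x Hx). lra.
Qed.

Definition prodl (p : R -> R) (v : list R) : R := fold_right (fun x acc => p x * acc) 1 v.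

Section BoxIntegral.

Variables (G : R -> R) (prG : Riemann_integrable G (-1) 1).
Hypothesis G_nonneg : forall x, 0 <= G x.

Lemma box_int_le_prodl (n : nat) (F : list R -> R) (A c : R) : 0 <= A -> 0 <= c ->
  (forall v, 0 <= F v <= A + c * prodl G v) ->
  0 <= box_int n F <= 2 ^ n * A + c * RiemannInt prG ^ n.
Proof.
  revert F A c. induction n as [|n IH]; intros F A c HA Hc HF.
  { simpl. specialize (HF nil). simpl in HF. lra. }
  set (I := RiemannInt prG). simpl box_int.
  assert (Hslice : forall x, 0 <= box_int n (fun v => F (x :: v)) <= 2 ^ n * A + (c * G x) * I ^ n).
  { intro x. apply IH; [exact HA | apply Rmult_le_pos; [exact Hc | apply G_nonneg] |].
    intro v. rewrite Rmult_assoc. exact (HF (x :: v)). }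
  set (prsum := RiemannInt_P10 (c * I ^ n) (RiemannInt_P14 (-1) 1 (2 ^ n * A)) prG).
  assert (Hsum := RiemannInt_P13 (RiemannInt_P14 (-1) 1 (2 ^ n * A)) prG prsum).
  rewrite RiemannInt_P15 in Hsum.
  destruct (RInt_unit_le (fun x => box_int n (fun v => F (x :: v))) _ prsum) as [H0 H1].
  { intros x _. unfold fct_cte. replace (c * I ^ n * G x) with (c * G x * I ^ n) by ring.
    apply Hslice. }
  fold I in Hsum. split; [exact H0|]. rewrite Hsum in H1. simpl. lra.
Qed.

End BoxIntegral.

Definition lorentz (t x : R) : R := / (1 + t * x ^ 2).

Lemma lorentz_bounds (t x : R) : 0 <= t -> 0 < lorentz t x <= 1.
Proof.
  intro Ht. unfold lorentz. assert (0 <= t * x ^ 2) by (apply Rmult_le_pos; [lra | apply pow2_ge_0]).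
  split; [apply Rinv_0_lt_compat; lra|]. rewrite <- Rinv_1. apply Rinv_le_contravar; lra.
Qed.

Lemma continuity_pt_lorentz (t x : R) : 0 <= t -> continuity_pt (lorentz t) x.
Proof.
  intro Ht. apply continuity_pt_filterlim, (@ex_derive_continuous R_AbsRing R_NormedModule).
  unfold lorentz. auto_derive. nra.
Qed.

Lemma RiemannInt_lorentz_le (t : R) (pr : Riemann_integrable (lorentz t) (-1) 1) :
  0 < t -> RiemannInt pr <= PI / sqrt t.
Proof.
  intro Ht. assert (Hs : 0 < sqrt t) by (apply sqrt_lt_R0; exact Ht).
  assert (Hss : sqrt t * sqrt t = t) by (apply sqrt_sqrt; lra).
  assert (Hprim : is_RInt (lorentz t) (-1) 1
                    (minus (atan (sqrt t * 1) / sqrt t) (atan (sqrt t * -1) / sqrt t))).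
  { apply (@is_RInt_derive R_CompleteNormedModule (fun x => atan (sqrt t * x) / sqrt t)).
    - intros x _. unfold lorentz. auto_derive; [lra|].
      replace (sqrt t * x * (sqrt t * x * 1)) with ((sqrt t * sqrt t) * x ^ 2) by ring.
      rewrite Hss. assert (0 <= t * x ^ 2) by (apply Rmult_le_pos; [lra | apply pow2_ge_0]).
      field; split; lra.
    - intros x _. apply continuity_pt_filterlim, continuity_pt_lorentz. lra. }
  rewrite <- (is_RInt_unique _ _ _ _ (ex_RInt_Reals_aux_1 _ _ _ pr)), (is_RInt_unique _ _ _ _ Hprim).
  unfold minus, plus, opp. simpl.
  replace (sqrt t * -1) with (- (sqrt t * 1)) by ring. rewrite atan_opp, Rmult_1_r.
  pose proof (atan_bound (sqrt t)).
  replace (atan (sqrt t) / sqrt t + - (- atan (sqrt t) / sqrt t)) with (2 * atan (sqrt t) / sqrt t)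
    by (field; lra).
  unfold Rdiv. apply Rmult_le_compat_r; [apply Rlt_le, Rinv_0_lt_compat; exact Hs | lra].
Qed.

Fixpoint sumsq (v : list R) : R := match v with nil => 0 | x :: w => x * x + sumsq w end.

Lemma normv_sq (v : list R) : normv v ^ 2 = sumsq v.
Proof.
  assert (Hsum : fold_right (fun x s => x * x + s) 0 v = sumsq v)
    by (induction v as [|x v IH]; simpl; [|rewrite IH]; reflexivity).
  assert (Hnn : 0 <= sumsq v).
  { clear Hsum. induction v as [|x v IH]; simpl; [lra|]. pose proof (Rle_0_sqr x). unfold Rsqr in *. lra. }
  unfold normv. rewrite Hsum. apply pow2_sqrt, Hnn.
Qed.

Lemma exp_le_prodl_lorentz (t : R) (v : list R) : 0 <= t ->
  exp (- (t * sumsq v)) <= prodl (lorentz t) v.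
Proof.
  intro Ht. induction v as [|x v IH]; simpl.
  - rewrite Rmult_0_r, Ropp_0, exp_0. lra.
  - replace (- (t * (x * x + sumsq v))) with (- (t * x ^ 2) + - (t * sumsq v)) by ring.
    rewrite exp_plus. apply Rmult_le_compat; try apply Rlt_le, exp_pos; [|exact IH].
    unfold lorentz. rewrite exp_Ropp. apply Rinv_le_contravar; [|apply exp_ineq1_le].
    assert (0 <= t * x ^ 2) by (apply Rmult_le_pos; [lra | apply pow2_ge_0]). lra.
Qed.

Lemma L2norm_le_of_gaussian_bound (n : nat) (F : list R -> R) (a c t : R) :
  0 < t -> 0 <= a -> 0 <= c ->
  (forall v, Rabs (F v) <= a + c * exp (- (t * normv v ^ 2) / 2)) ->
  L2norm n F <= sqrt (2 ^ n * (2 * a ^ 2) + 2 * c ^ 2 * (PI / sqrt t) ^ n).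
Proof.
  intros Ht Ha Hc HF.
  assert (prG : Riemann_integrable (lorentz t) (-1) 1).
  { apply continuity_implies_RiemannInt; [lra|]. intros x _. apply continuity_pt_lorentz. lra. }
  assert (HI : 0 <= RiemannInt prG <= PI / sqrt t).
  { split; [|apply RiemannInt_lorentz_le, Ht].
    apply RiemannInt_unit_nonneg. intros x _. apply Rlt_le, lorentz_bounds. lra. }
  assert (Hsq : forall v, 0 <= F v ^ 2 <= 2 * a ^ 2 + 2 * c ^ 2 * prodl (lorentz t) v).
  { intro v. split; [apply pow2_ge_0|].
    set (E := exp (- (t * normv v ^ 2) / 2)).
    assert (HE2 : E ^ 2 <= prodl (lorentz t) v).
    { replace (E ^ 2) with (exp (- (t * sumsq v))).
      - apply exp_le_prodl_lorentz. lra.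
      - unfold E. rewrite <- normv_sq, <- (Rsqr_pow2 (exp _)). unfold Rsqr.
        rewrite <- exp_plus. f_equal. field. }
    pose proof (pow2_ge_0 (a - c * E)). pose proof (pow2_ge_0 c).
    rewrite <- Rsqr_pow2, Rsqr_abs, Rsqr_pow2.
    apply Rle_trans with ((a + c * E) ^ 2); [apply pow_incr; split; [apply Rabs_pos | apply HF]|].
    assert (c ^ 2 * E ^ 2 <= c ^ 2 * prodl (lorentz t) v) by (apply Rmult_le_compat_l; lra).
    nra. }
  destruct (box_int_le_prodl _ prG (fun x => Rlt_le _ _ (proj1 (lorentz_bounds t x (Rlt_le _ _ Ht))))
              n _ (2 * a ^ 2) (2 * c ^ 2) ltac:(pose proof (pow2_ge_0 a); lra)
              ltac:(pose proof (pow2_ge_0 c); lra) Hsq)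
    as [_ Hbox].
  apply sqrt_le_1_alt. eapply Rle_trans; [exact Hbox|].
  apply Rplus_le_compat_l, Rmult_le_compat_l; [pose proof (pow2_ge_0 c); lra|].
  apply pow_incr, HI.
Qed.

Lemma smooth_bounded_on (chi : R -> R) (a b : R) : smooth chi -> a <= b ->
  exists X, forall r, a <= r <= b -> Rabs (chi r) <= X.
Proof.
  intros [F [HF0 HF]] Hab.
  assert (Hc : forall x, continuity_pt chi x).
  { intro x. apply derivable_continuous_pt. exists (F 1%nat x). rewrite <- HF0. apply HF. }
  destruct (continuity_ab_maj (fun x => Rabs (chi x)) a b Hab) as [M [HM _]].
  { intros c _. apply (continuity_pt_comp chi Rabs); [apply Hc | apply Rcontinuity_abs]. }
  exists (Rabs (chi M)). exact HM.
Qed.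

Lemma inv_pow_le_Rpower (n l : nat) (t : R) : 1 <= t ->
  / t ^ (n + l) <= Rpower t (- INR n / 4 - INR l).
Proof.
  intro Ht. rewrite <- (Rpower_pow (n + l) t), <- Rpower_Ropp by lra.
  apply Rle_Rpower; [lra|]. rewrite plus_INR. pose proof (pos_INR n). lra.
Qed.

Lemma Rpower_sq (n l : nat) (t : R) : 1 <= t ->
  Rpower t (- INR n / 4 - INR l) ^ 2 = (/ t ^ l) ^ 2 * (/ sqrt t) ^ n.
Proof.
  intro Ht.
  assert (Hpow : forall y k, Rpower t y ^ k = Rpower t (y * INR k)).
  { intros y k. rewrite <- Rpower_pow by apply exp_pos. rewrite Rpower_mult. reflexivity. }
  rewrite <- (Rpower_pow l t), <- Rpower_Ropp, <- Rpower_sqrt, <- Rpower_Ropp, !Hpow,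
    <- Rpower_plus by lra.
  f_equal. simpl INR. field.
Qed.

Lemma m1_small_part_le_Rpower (b n l : nat) : exists K, 0 <= K /\
  forall t, 1 <= t -> m1_small_part b t <= K * Rpower t (- INR n / 4 - INR l).
Proof.
  set (p := (2 * b + (n + l))%nat). set (Kp := 3 ^ p * (2 * INR p + 2) ^ p).
  assert (HKp : 0 <= Kp).
  { apply Rmult_le_pos; apply pow_le; [lra | pose proof (pos_INR p); lra]. }
  assert (Hb : 0 <= INR b) by apply pos_INR.
  exists ((/ 2 + INR b) * Kp). split; [apply Rmult_le_pos; lra|].
  intros t Ht. unfold m1_small_part.
  assert (Hdecay : t ^ p * exp (- t / 6) <= Kp).
  { assert (Hexp : exp (t / 6) * exp (- t / 6) = 1) by (rewrite <- exp_plus, <- exp_0; f_equal; field).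
    pose proof (pow_le_exp_half p (t / 3) ltac:(lra)) as H.
    replace (t / 3 / 2) with (t / 6) in H by field.
    replace (t ^ p) with (3 ^ p * (t / 3) ^ p) by (rewrite <- Rpow_mult_distr; f_equal; field).
    assert ((t / 3) ^ p <= (1 + t / 3) ^ p) by (apply pow_incr; lra).
    pose proof (pow_le 3 p ltac:(lra)). pose proof (exp_pos (- t / 6)).
    replace Kp with (Kp * (exp (t / 6) * exp (- t / 6))) by (rewrite Hexp; ring). unfold Kp.
    apply Rle_trans with (3 ^ p * (1 + t / 3) ^ p * exp (- t / 6)).
    { apply Rmult_le_compat_r; [lra|]. apply Rmult_le_compat_l; lra. }
    replace (3 ^ p * (2 * INR p + 2) ^ p * (exp (t / 6) * exp (- t / 6)))
      with (3 ^ p * ((2 * INR p + 2) ^ p * exp (t / 6)) * exp (- t / 6)) by ring.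
    apply Rmult_le_compat_r; [lra|]. apply Rmult_le_compat_l; lra. }
  assert (Htp : t ^ (2 * b) = t ^ p * / t ^ (n + l)).
  { unfold p. rewrite pow_add. field. apply pow_nonzero. lra. }
  assert (Hexp : exp (- t / 2) * exp (t / 3) = exp (- t / 6)) by (rewrite <- exp_plus; f_equal; field).
  assert (Hlarge : 1 <= t ^ (2 * b)) by (rewrite <- (pow1 (2 * b)); apply pow_incr; lra).
  assert (exp (- t / 2) <= exp (- t / 6)) by (apply exp_le_exp; lra).
  assert (Hinv : 0 < / t ^ (n + l)) by (apply Rinv_0_lt_compat, pow_lt; lra).
  pose proof (inv_pow_le_Rpower n l t Ht). pose proof (exp_pos (- t / 6)).
  assert (Hmain : exp (- t / 2) * (/ 2 + INR b * (t ^ (2 * b) * exp (t / 3)))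
                  <= (/ 2 + INR b) * (t ^ (2 * b) * exp (- t / 6))).
  { rewrite <- Hexp. nra. }
  eapply Rle_trans; [exact Hmain|]. rewrite Htp.
  replace (t ^ p * / t ^ (n + l) * exp (- t / 6)) with (t ^ p * exp (- t / 6) * / t ^ (n + l)) by ring.
  rewrite (Rmult_assoc (/ 2 + INR b)). apply Rmult_le_compat_l; [lra|].
  apply Rmult_le_compat; try lra. apply Rmult_le_pos; [apply pow_le; lra | lra].
Qed.

Lemma Rabs_m1_le_Rpower (chi : R -> R) (n b l : nat) :
  smooth chi -> (forall r, r >= / 3 -> chi r = 0) ->
  exists K0 K1, 0 <= K0 /\ 0 <= K1 /\ forall r t, 0 <= r -> 1 <= t ->
    Rabs (m1 chi b l r t)
    <= K0 * Rpower t (- INR n / 4 - INR l) + K1 * / t ^ l * exp (- (t * r ^ 2) / 2).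
Proof.
  intros Hsmooth Hchi0.
  destruct (smooth_bounded_on chi 0 (/ 3) Hsmooth ltac:(lra)) as [X HX].
  assert (HX0 : 0 <= X) by (eapply Rle_trans; [apply Rabs_pos | apply (HX 0); lra]).
  destruct (m1_small_part_le_Rpower b n l) as [K [HK Hsmall]].
  pose proof (D1_remainder_const_nonneg l).
  exists (X * K), (X * (/ 2 * D1_remainder_const l)).
  split; [|split]; [apply Rmult_le_pos; lra .. |].
  intros r t Hr Ht. eapply Rle_trans; [apply (Rabs_m1_le chi X); assumption|].
  assert (X * m1_small_part b t <= X * (K * Rpower t (- INR n / 4 - INR l)))
    by (apply Rmult_le_compat_l; [exact HX0 | apply Hsmall, Ht]).
  lra.
Qed.

Lemma L2norm_le_Rpower (n l : nat) (F : list R -> R) (K0 K1 t : R) :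
  0 <= K0 -> 0 <= K1 -> 1 <= t ->
  (forall v, Rabs (F v) <= K0 * Rpower t (- INR n / 4 - INR l)
                          + K1 * / t ^ l * exp (- (t * normv v ^ 2) / 2)) ->
  L2norm n F <= sqrt (2 ^ n * (2 * K0 ^ 2) + 2 * K1 ^ 2 * PI ^ n) * Rpower t (- INR n / 4 - INR l).
Proof.
  intros HK0 HK1 Ht HF.
  set (P := Rpower t (- INR n / 4 - INR l)) in *. set (Z := 2 ^ n * (2 * K0 ^ 2) + 2 * K1 ^ 2 * PI ^ n).
  assert (HP : 0 < P) by apply exp_pos.
  assert (Htl : 0 < / t ^ l) by (apply Rinv_0_lt_compat, pow_lt; lra).
  assert (HZ : 0 <= Z).
  { pose proof (pow_le 2 n ltac:(lra)). pose proof (pow_le PI n (Rlt_le _ _ PI_RGT_0)).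
    pose proof (pow2_ge_0 K0). pose proof (pow2_ge_0 K1). unfold Z. nra. }
  assert (Hsum : 2 ^ n * (2 * (K0 * P) ^ 2) + 2 * (K1 * / t ^ l) ^ 2 * (PI / sqrt t) ^ n = Z * P ^ 2).
  { replace ((K0 * P) ^ 2) with (K0 ^ 2 * P ^ 2) by ring.
    unfold P. rewrite Rpower_sq by lra. unfold Z, Rdiv. rewrite !Rpow_mult_distr. ring. }
  eapply Rle_trans.
  { apply (L2norm_le_of_gaussian_bound n F (K0 * P) (K1 * / t ^ l) t);
      [lra | apply Rmult_le_pos; lra | apply Rmult_le_pos; lra | exact HF]. }
  rewrite Hsum, sqrt_mult, sqrt_pow2 by (try apply pow2_ge_0; lra). apply Rle_refl.
Qed.

Theorem proposition3 (n b l : nat) (chi : R -> R) :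
  (1 <= n)%nat ->
  smooth chi ->
  (forall r, r >= / 3 -> chi r = 0) ->
  (forall r, 0 <= r <= / 4 -> chi r = 1) ->
  exists C : R, C > 0 /\
    forall t : R, t >= 1 ->
      L2norm n (fun xi => m1 chi b l (normv xi) t)
        <= C * Rpower t (2 * (INR b - 1)) * exp (- t / 2)
           + C * Rpower t (- (INR n) / 4 - INR l).
Proof.
  intros _ Hsmooth Hchi0 _.
  destruct (Rabs_m1_le_Rpower chi n b l Hsmooth Hchi0) as [K0 [K1 [HK0 [HK1 Hm1]]]].
  set (Z := 2 ^ n * (2 * K0 ^ 2) + 2 * K1 ^ 2 * PI ^ n).
  exists (sqrt Z + 1). split; [pose proof (sqrt_pos Z); lra|].
  intros t Ht.
  assert (HL := L2norm_le_Rpower n l (fun xi => m1 chi b l (normv xi) t) K0 K1 t HK0 HK1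
                  ltac:(lra) (fun v => Hm1 (normv v) t (sqrt_pos _) ltac:(lra))).
  assert (0 <= Rpower t (2 * (INR b - 1)) * exp (- t / 2))
    by (apply Rmult_le_pos; apply Rlt_le, exp_pos).
  assert (0 < Rpower t (- INR n / 4 - INR l)) by apply exp_pos.
  fold Z in HL. pose proof (sqrt_pos Z). nra.
Qed.
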